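(* Let $V$ be a finite set of variables and let $(\mathit{base}_0, \mathit{stay}_0, \mathit{step}_0, \mathit{conc}_0)$ and $(\mathit{base}_1, \mathit{stay}_1, \mathit{step}_1, \mathit{conc}_1)$ be generalized acceleration lemmas (GALs) over $V$. Define $\mathit{step} := \mathit{step}_0 \lor (\mathit{conc}_1 \land \lnot \mathit{base}_1 \land \mathit{step}_1 \land \mathit{stay}_0)$ and $\mathit{stay} := \mathit{stay}_0 \land \mathit{stay}_1 \land (\mathit{base}_1 \to \mathit{base}_1[V \mapsto V'])$. Then the tuple $(\mathit{base}_0, \mathit{stay}, \mathit{step}, \mathit{conc}_0)$ is also a GAL over $V$.
   Context: Fix a first-order theory $T$. For a set of variables $X$, $\mathcal{A}(X)$ denotes the set of assignments $\nu: X \to \mathcal{V}$ (values). $X' = \{x' \mid x \in X\}$ is a disjoint primed copy of $X$; for $\nu \in \mathcal{A}(X)$, $\nu' \in \mathcal{A}(X')$ is given by $\nu'(x') = \nu(x)$; for $\nu_1,\nu_2 \in \mathcal{A}(X)$, $\langle \nu_1,\nu_2\rangle := \nu_1 \uplus \nu_2'$. $\nu \models_T \alpha$ denotes entailment in $T$. For a formula $\alpha$, $\alpha[V\mapsto V']$ is the result of replacing each $v\in V$ simultaneously by $v'$. A generalized acceleration lemma (GAL) over $V$ is a tuple $(\mathit{base}, \mathit{stay}, \mathit{step}, \mathit{conc})$ of first-order formulas with $\mathit{base}, \mathit{conc}$ having free variables in $V$ and $\mathit{stay}, \mathit{step}$ having free variables in $V \cup V'$, such that: (I) for every sequence $\alpha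 \in \mathcal{A}(V)^\omega$ with $\alpha[0] \models_T \mathit{conc}$, if (a) for all $i$, $\langle\alpha[i],\alpha[i+1]\rangle \models_T \mathit{step} \lor \mathit{stay}$, and (b) for all $i$ there is $j \ge i$ with $\langle\alpha[j],\alpha[j+1]\rangle \models_T \mathit{step}$, then there is $k$ with $\alpha[k] \models_T \mathit{base}$; and (II) for all $\nu,\nu' \in \mathcal{A}(V)$ with $\nu \models_T \mathit{conc}$ and $\langle \nu,\nu'\rangle \models_T \mathit{step}\lor\mathit{stay}$, we have $\nu' \models_T \mathit{conc}$. *)

(* Formulas are represented semantically: a formula with free
   variables in V is the predicate "nu |=_T alpha" on assignments nu : V -> Val;
   a formula with free variables in V u V' is a predicate on pairs <nu1,nu2>
   (nu1 gives the unprimed, nu2 the primed variables). *)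
From Stdlib Require Import Arith FinFun.

Definition assignment (V Val : Type) : Type := V -> Val.

Definition sformula (V Val : Type) : Type := assignment V Val -> Prop.
Definition tformula (V Val : Type) : Type := assignment V Val -> assignment V Val -> Prop.

(* alpha[V |-> V'] for a state formula alpha: evaluated at <nu1,nu2> it is alpha at nu2. *)
Definition prime_sf {V Val : Type} (a : sformula V Val) : tformula V Val :=
  fun _ nu2 => a nu2.

Definition is_GAL {V Val : Type}
  (base : sformula V Val) (stay step : tformula V Val) (conc : sformula V Val) : Prop :=
  (forall alpha : nat -> assignment V Val,
      conc (alpha 0) ->
      (forall i, step (alpha i) (alpha (S i)) \/ stay (alpha i) (alpha (S i))) ->
      (forall i, exists j, i <= j /\ step (alpha j) (alpha (S j))) ->
      exists k, base (alpha k))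
  /\
  (forall nu nu' : assignment V Val,
      conc nu -> (step nu nu' \/ stay nu nu') -> conc nu').

(* Every combined transition is a step0 or stay0 transition, so conc0 is
   invariant.  For progress, a run either takes step0 infinitely often, and
   the first GAL applies directly, or from some point on every combined step
   is a step1 taken from a non-base1 state.  In the latter case the tail of
   the run is a run of the second GAL, which therefore reaches base1; but the
   combined stay preserves base1 and the combined step needs ~ base1, so no
   step can follow, a contradiction. *)
From Stdlib Require Import Arith FinFun Lia Classical.

Section Runs.

Context {A : Type}.

Definition infinitely_often (R : A -> A -> Prop) (alpha : nat -> A) : Prop :=
  forall i, exists j, i <= j /\ R (alpha j) (alpha (S j)).

Lemma not_infinitely_often {R : A -> A -> Prop} {alpha : nat -> A} :
  ~ infinitely_often R alpha ->
  exists N, forall j, N <= j -> ~ R (alpha j) (alpha (S j)).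
Proof.
  intros Hnot.
  destruct (not_all_ex_not _ _ Hnot) as [N HN].
  exists N; intros j Hj Rj.
  apply HN; exists j; auto.
Qed.

Lemma infinitely_often_eventually_impl {R R' : A -> A -> Prop}
    {alpha : nat -> A} (N : nat) :
  infinitely_often R alpha ->
  (forall j, N <= j -> R (alpha j) (alpha (S j)) -> R' (alpha j) (alpha (S j))) ->
  infinitely_often R' alpha.
Proof.
  intros Hinf Himpl i.
  destruct (Hinf (N + i)) as [j [Hj Rj]].
  exists j; split; [lia | apply Himpl; [lia | exact Rj]].
Qed.

Lemma infinitely_often_shift {R : A -> A -> Prop} {alpha : nat -> A} (M : nat) :
  infinitely_often R alpha -> infinitely_often R (fun i => alpha (M + i)).
Proof.
  intros Hinf i.
  destruct (Hinf (M + i)) as [j [Hj Rj]].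
  exists (j - M); split; [lia |].
  replace (M + (j - M)) with j by lia.
  replace (M + S (j - M)) with (S j) by lia.
  exact Rj.
Qed.

Lemma invariant_from (P : A -> Prop) (alpha : nat -> A) (K : nat) :
  P (alpha K) ->
  (forall i, K <= i -> P (alpha i) -> P (alpha (S i))) ->
  forall i, K <= i -> P (alpha i).
Proof.
  intros HK Hstep i Hi.
  induction Hi as [| i Hi IH]; [exact HK | exact (Hstep i Hi IH)].
Qed.

End Runs.

Lemma GAL_reaches_base_from {V Val : Type}
    {base : sformula V Val} {stay step : tformula V Val} {conc : sformula V Val}
    (alpha : nat -> assignment V Val) (M : nat) :
  is_GAL base stay step conc ->
  conc (alpha M) ->
  (forall i, M <= i -> step (alpha i) (alpha (S i)) \/ stay (alpha i) (alpha (S i))) ->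
  infinitely_often step alpha ->
  exists k, M <= k /\ base (alpha k).
Proof.
  intros [Hreach _] Hconc Htrans Hinf.
  destruct (Hreach (fun i => alpha (M + i))) as [k Hk].
  - rewrite Nat.add_0_r; exact Hconc.
  - intro i; rewrite Nat.add_succ_r; apply Htrans; lia.
  - exact (infinitely_often_shift M Hinf).
  - exists (M + k); split; [lia | exact Hk].
Qed.

Section Combination.

Context {V Val : Type}.
Context {base0 conc0 base1 conc1 : sformula V Val}.
Context {stay0 step0 stay1 step1 : tformula V Val}.
Hypothesis GAL0 : is_GAL base0 stay0 step0 conc0.
Hypothesis GAL1 : is_GAL base1 stay1 step1 conc1.

Definition comb_step : tformula V Val := fun nu nu' =>
  step0 nu nu' \/ (conc1 nu /\ ~ base1 nu /\ step1 nu nu' /\ stay0 nu nu').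

Definition comb_stay : tformula V Val := fun nu nu' =>
  stay0 nu nu' /\ stay1 nu nu' /\ (base1 nu -> prime_sf base1 nu nu').

Lemma comb_trans_first {nu nu' : assignment V Val} :
  comb_step nu nu' \/ comb_stay nu nu' -> step0 nu nu' \/ stay0 nu nu'.
Proof. unfold comb_step, comb_stay; tauto. Qed.

Lemma comb_trans_second {nu nu' : assignment V Val} :
  ~ step0 nu nu' ->
  comb_step nu nu' \/ comb_stay nu nu' -> step1 nu nu' \/ stay1 nu nu'.
Proof. unfold comb_step, comb_stay; tauto. Qed.

Lemma comb_step_second {nu nu' : assignment V Val} :
  ~ step0 nu nu' -> comb_step nu nu' -> conc1 nu /\ ~ base1 nu /\ step1 nu nu'.
Proof. unfold comb_step; tauto. Qed.

Lemma comb_trans_keeps_base1 {nu nu' : assignment V Val} :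
  ~ step0 nu nu' ->
  comb_step nu nu' \/ comb_stay nu nu' -> base1 nu -> base1 nu'.
Proof. unfold comb_step, comb_stay, prime_sf; tauto. Qed.

Lemma comb_preserves_conc0 {nu nu' : assignment V Val} :
  conc0 nu -> comb_step nu nu' \/ comb_stay nu nu' -> conc0 nu'.
Proof.
  intros Hconc Htrans.
  exact (proj2 GAL0 nu nu' Hconc (comb_trans_first Htrans)).
Qed.

Section RunWithoutStep0.

Variable alpha : nat -> assignment V Val.
Variable N : nat.
Hypothesis Htrans :
  forall i, comb_step (alpha i) (alpha (S i)) \/ comb_stay (alpha i) (alpha (S i)).
Hypothesis Hinf : infinitely_often comb_step alpha.
Hypothesis Hno_step0 : forall j, N <= j -> ~ step0 (alpha j) (alpha (S j)).

Lemma comb_run_reaches_base1 : exists K, N <= K /\ base1 (alpha K).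
Proof.
  destruct (Hinf N) as [M [HM Hstep]].
  destruct (comb_step_second (Hno_step0 _ HM) Hstep) as [Hconc1 _].
  destruct (GAL_reaches_base_from alpha M GAL1 Hconc1) as [K [HK Hbase]].
  - intros i Hi; apply comb_trans_second; [apply Hno_step0; lia | apply Htrans].
  - apply (infinitely_often_eventually_impl N Hinf).
    intros j Hj Hstep_j; exact (proj2 (proj2 (comb_step_second (Hno_step0 _ Hj) Hstep_j))).
  - exists K; split; [lia | exact Hbase].
Qed.

Lemma comb_run_without_step0_absurd : False.
Proof.
  destruct comb_run_reaches_base1 as [K [HK Hbase]].
  assert (Hbase_from : forall i, K <= i -> base1 (alpha i)).
  { apply invariant_from; [exact Hbase |].
    intros i Hi; apply comb_trans_keeps_base1; [apply Hno_step0; lia | apply Htrans]. }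
  destruct (Hinf K) as [j [Hj Hstep]].
  destruct (comb_step_second (Hno_step0 _ (Nat.le_trans _ _ _ HK Hj)) Hstep) as [_ [Hnbase _]].
  exact (Hnbase (Hbase_from j Hj)).
Qed.

End RunWithoutStep0.

Lemma comb_reaches_base0 (alpha : nat -> assignment V Val) :
  conc0 (alpha 0) ->
  (forall i, comb_step (alpha i) (alpha (S i)) \/ comb_stay (alpha i) (alpha (S i))) ->
  infinitely_often comb_step alpha ->
  exists k, base0 (alpha k).
Proof.
  intros Hconc Htrans Hinf.
  destruct (classic (infinitely_often step0 alpha)) as [Hstep0 | Hstep0].
  - apply (proj1 GAL0 alpha Hconc); [| exact Hstep0].
    intro i; apply comb_trans_first, Htrans.
  - destruct (not_infinitely_often Hstep0) as [N Hno_step0].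
    destruct (comb_run_without_step0_absurd alpha N Htrans Hinf Hno_step0).
Qed.

Lemma comb_is_GAL : is_GAL base0 comb_stay comb_step conc0.
Proof.
  split; [exact comb_reaches_base0 | exact @comb_preserves_conc0].
Qed.

End Combination.

Theorem lemma3 (V Val : Type) (HV : Finite V)
  (base0 conc0 base1 conc1 : sformula V Val)
  (stay0 step0 stay1 step1 : tformula V Val) :
  is_GAL base0 stay0 step0 conc0 ->
  is_GAL base1 stay1 step1 conc1 ->
  let step : tformula V Val := fun nu nu' =>
    step0 nu nu' \/ (conc1 nu /\ ~ base1 nu /\ step1 nu nu' /\ stay0 nu nu') in
  let stay : tformula V Val := fun nu nu' =>
    stay0 nu nu' /\ stay1 nu nu' /\ (base1 nu -> prime_sf base1 nu nu') in
  is_GAL base0 stay step conc0.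
Proof.
  intros GAL0 GAL1 step stay.
  exact (comb_is_GAL GAL0 GAL1).
Qed.
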